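(* Let $\mathcal{X}$ be a nonempty closed domain set whose closed convex hull $\operatorname{clconv}(\mathcal{X})$ contains no line, and let $0\le\tilde m\le m$ be integers. Suppose that for every face $F$ of $\operatorname{clconv}(\mathcal{X})$ of dimension at most $\tilde m$ and every face $\widehat F$ of the recession cone $\operatorname{rec}(\operatorname{clconv}(\mathcal{X}))$ of dimension at most $\tilde m+1$, the Minkowski sum satisfies $F+\widehat F\subseteq\mathcal{X}$. Then for every choice of $m$ LMIs of dimension $\tilde m$, $\mathcal{C}_{\mathrm{rel}}=\operatorname{clconv}(\mathcal{C})$.
   Context: Let $\mathcal{Q}$ be one of $\mathbb{S}^n_+$, $\mathbb{S}^n$ or $\mathbb{R}^{n\times p}$, where $k\le n\le p$ are positive integers, with trace inner product $\langle A,X\rangle=\operatorname{tr}(A^\top X)$. A domain set is a set $\mathcal{X}=\{X\in\mathcal{Q}:\operatorname{rank}(X)\le k,\ F_j(X)\le0\ \forall j\in[t]\}$ with each $F_j:\mathcal{Q}\to\mathbb{R}$ continuous. $\operatorname{clconv}$ is closed convex hull. A system of $m$ LMIs consists of matrices $A_1,\dots,A_m$ (same size as elements of $\mathcal{Q}$, possibly non-symmetric) and bounds $-\infty\le b_i^l\le b_i^u\le+\infty$; its dimension is $\dim\operatorname{span}\{A_1,\dots,A_m\}$. Set $\mathcal{C}=\{X\in\mathcal{X}: b_i^l\le\langle A_i,X\rangle\le b_i^u\ \forall i\}$ and $\mathcal{C}_{\mathrm{rel}}=\{X\in\operatorname{clconv}(\mathcal{X}): b_i^l\le\langle A_i,X\rangle\le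 b_i^u\ \forall i\}$. A face of a closed convex set $D$ is a convex $F\subseteq D$ such that any segment $[a,b]\subseteq D$ whose open part meets $F$ lies in $F$; its dimension is that of its affine hull. The recession cone of a closed convex set $D$ is $\operatorname{rec}(D)=\{d: x+td\in D\ \forall x\in D,\ t\ge0\}$. *)

From HB Require Import structures.
From mathcomp Require Import all_boot all_order all_algebra.
From mathcomp Require Import all_classical all_reals all_analysis.
Set Implicit Arguments. Unset Strict Implicit. Unset Printing Implicit Defensive.
Import Order.TTheory GRing.Theory Num.Theory numFieldNormedType.Exports.
Local Open Scope classical_set_scope.
Local Open Scope ring_scope.

Section Defs.
Variables (R : realType) (n p : nat).
Notation M := 'M[R]_(n, p).

Inductive Qkind := QPSD | QSym | QFull.

Definition symmx (X : M) : Prop :=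
  exists e : p = n, (castmx (erefl n, e) X)^T = castmx (erefl n, e) X.

Definition psdmx (X : M) : Prop :=
  exists e : p = n, (castmx (erefl n, e) X)^T = castmx (erefl n, e) X /\
    forall v : 'rV[R]_n, 0 <= (v *m castmx (erefl n, e) X *m v^T) 0 0.

Definition Qset (q : Qkind) : set M :=
  match q with
  | QPSD => [set X | psdmx X]
  | QSym => [set X | symmx X]
  | QFull => setT
  end.

Definition mxinner (A X : M) : R := \tr (A^T *m X).

Definition domain_set (q : Qkind) (k t : nat) (F : 'I_t -> M -> R) : set M :=
  [set X | Qset q X /\ (\rank X <= k)%N /\ forall j, F j X <= 0].

Definition conv_hull (S : set M) : set M :=
  [set z | exists (N : nat) (w : 'I_N -> R) (x : 'I_N -> M),
     (forall i, 0 <= w i) /\ \sum_(i < N) w i = 1 /\ (forall i, S (x i)) /\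
     z = \sum_(i < N) w i *: x i].

Definition clconv (S : set M) : set M := closure (conv_hull S).

Definition is_convex (S : set M) : Prop :=
  forall x y (l : R), S x -> S y -> 0 <= l <= 1 -> S ((1 - l) *: x + l *: y).

Definition segment (a b : M) : set M :=
  [set z | exists l : R, 0 <= l <= 1 /\ z = (1 - l) *: a + l *: b].
Definition open_segment (a b : M) : set M :=
  [set z | exists l : R, 0 < l < 1 /\ z = (1 - l) *: a + l *: b].

Definition face (D F : set M) : Prop :=
  is_convex F /\ F `<=` D /\
  forall a b, segment a b `<=` D -> open_segment a b `&` F !=set0 ->
    segment a b `<=` F.

(* dimension of the affine hull of F is at most d (the empty set has
   dimension -1): the direction space (span of F - F) has dim <= d *)
Definition affdim_le (F : set M) (d : nat) : Prop :=
  F = set0 \/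
  exists V : {vspace M}, (\dim V <= d)%N /\
    forall x y, F x -> F y -> x - y \in V.

Definition rec_cone (D : set M) : set M :=
  [set d | forall x (t : R), D x -> 0 <= t -> D (x + t *: d)].

Definition no_line (D : set M) : Prop :=
  ~ exists x d : M, d != 0 /\ forall t : R, D (x + t *: d).

Definition mink_sum (A B : set M) : set M :=
  [set z | exists x y, A x /\ B y /\ z = x + y].

Definition lmi_dim (m : nat) (A : 'I_m -> M) : nat :=
  \dim <<[seq A i | i <- enum 'I_m]>>%VS.

Definition lmi_cut (S : set M) (m : nat) (A : 'I_m -> M)
    (bl bu : 'I_m -> \bar R) : set M :=
  [set X | S X /\ forall i, (bl i <= (mxinner (A i) X)%:E <= bu i)%E].

End Defs.

From HB Require Import structures.
From mathcomp Require Import all_boot all_order all_algebra.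
From mathcomp Require Import all_classical all_reals all_analysis.
From mathcomp Require Import ring lra zify.
Set Implicit Arguments. Unset Strict Implicit. Unset Printing Implicit Defensive.
Import Order.TTheory GRing.Theory Num.Theory numFieldNormedType.Exports.
Local Open Scope classical_set_scope.
Local Open Scope ring_scope.

(* Let C be clconv(X) cut by the LMIs; it is closed, convex and contains no line.
   Moving from a point of C along a direction in which it can move both ways, but
   which is not a recession direction, until the boundary is hit lowers the dimension
   of the minimal face; when no such direction is left the minimal face is a point or
   a half-line.  Hence every point of C is a convex combination of points e + s r with
   e an extreme point and r an extreme direction of C.  At an extreme point e of C no
   direction of the minimal face of clconv(X) at e lies in the common kernel of the
   A_i, so that face has dimension at most dim span{A_i}; likewise the minimal face of
   the recession cone at r has dimension at most one more.  The face hypothesis puts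
   e + s r in X, so C lies in conv(X cut by the LMIs); the converse is by closedness
   and convexity of C. *)

Local Ltac mxring := apply/matrixP => ? ?; rewrite !mxE; ring.
Local Ltac mxfield := apply/matrixP => ? ?; rewrite !mxE; field.

Lemma vspace_of_subspace (K : fieldType) (V : vectType K) (P : set V) :
  P 0 -> (forall u v, P u -> P v -> P (u + v)) -> (forall c v, P v -> P (c *: v)) ->
  exists U : {vspace V}, forall v, v \in U <-> P v.
Proof.
move=> P0 PD PZ.
pose inP d := exists U : {vspace V}, (forall v, v \in U -> P v) /\ \dim U = d.
have inP0 : exists d, `[< inP d >].
  exists 0%N; apply/asboolP; exists 0%VS; split; last exact: dimv0.
  by move=> v; rewrite memv0 => /eqP ->.
have inP_bound d : `[< inP d >] -> (d <= \dim {: V})%N.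
  by move=> /asboolP [U [_ <-]]; exact/dimvS/subvf.
case: (ex_maxnP inP0 inP_bound) => d /asboolP [U [UP <-]] Umax.
exists U => v; split=> [/UP //|Pv]; apply: contrapT => vU.
have UUv : (U <= U + <[v]>)%VS := addvSl U <[v]>.
have : (\dim U < \dim (U + <[v]>))%N.
  by rewrite (ltn_leqif (dimv_leqif_sup UUv)) subv_add subvv -memvE; apply/negP.
have : (\dim (U + <[v]>) <= \dim U)%N.
  apply: Umax; apply/asboolP; exists (U + <[v]>)%VS; split=> //.
  by move=> w /memv_addP [u uU [w' /vlineP [k ->] ->]]; apply: PD; [exact: UP|exact: PZ].
lia.
Qed.

Section ConvexSets.
Variables (R : realType) (n p : nat).
Local Notation M := 'M[R]_(n, p).
Implicit Types (D S T : set M) (x y z w d f : M).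

Lemma convex_ray_le D x f e t : is_convex D -> D x -> D (x + e *: f) -> 0 < e ->
  0 <= t <= e -> D (x + t *: f).
Proof.
move=> cD Dx Df e0 /andP[t0 te].
have -> : x + t *: f = (1 - t / e) *: x + (t / e) *: (x + e *: f).
  mxfield; lra.
apply: cD => //; rewrite divr_ge0 ?(ltW e0) //=.
by rewrite ler_pdivrMr // mul1r.
Qed.

Lemma convex_comb3 D x y z (a b : R) : is_convex D -> D x -> D y -> D z ->
  0 <= a -> 0 <= b -> a + b <= 1 -> D (x + a *: (y - x) + b *: (z - x)).
Proof.
move=> cD Dx Dy Dz a0 b0 ab1.
have [ab_eq0|ab_neq0] := eqVneq (a + b) 0.
  have [-> ->] : a = 0 /\ b = 0 by split; lra.
  by rewrite !scale0r !addr0.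
have ab_gt0 : 0 < a + b by rewrite lt_def ab_neq0 /=; lra.
have Dyz : D ((1 - b / (a + b)) *: y + b / (a + b) *: z).
  apply: cD => //; rewrite divr_ge0 //=; last lra.
  by rewrite ler_pdivrMr // mul1r; lra.
have -> : x + a *: (y - x) + b *: (z - x) =
    (1 - (a + b)) *: x + (a + b) *: ((1 - b / (a + b)) *: y + b / (a + b) *: z).
  mxfield; lra.
by apply: cD => //; apply/andP; split; lra.
Qed.

Lemma conv_hull_min S D : is_convex D -> S `<=` D -> conv_hull S `<=` D.
Proof.
move=> cD SD z [N [w [x [w0 [w1 [Sx ->]]]]]].
elim: N w x w0 w1 Sx => [|N IH] w x w0 w1 Sx.
  by move: w1; rewrite big_ord0 => /eqP; rewrite eq_sym oner_eq0.
rewrite big_ord_recr /=; rewrite big_ord_recr /= in w1.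
set s := \sum_(i < N) w (widen_ord (leqnSn N) i) in w1 *.
have s0 : 0 <= s by apply: sumr_ge0 => i _.
have [sz|snz] := eqVneq s 0.
  have wz := psumr_eq0P (fun i _ => w0 (widen_ord (leqnSn N) i)) sz.
  rewrite big1 ?add0r; last by move=> i _; rewrite wz // scale0r.
  have -> : w ord_max = 1 by rewrite -w1 sz add0r.
  by rewrite scale1r; apply: SD.
have sp : 0 < s by rewrite lt_def snz s0.
pose w' i := w (widen_ord (leqnSn N) i) / s.
have Dy : D (\sum_(i < N) w' i *: x (widen_ord (leqnSn N) i)).
  apply: IH => //; first by move=> i; rewrite divr_ge0.
  by rewrite -mulr_suml divff.
have := cD _ _ (w ord_max) Dy (SD _ (Sx ord_max)).
have -> : 1 - w ord_max = s by rewrite -w1 addrK.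
have -> : s *: (\sum_(i < N) w' i *: x (widen_ord (leqnSn N) i)) =
    \sum_(i < N) w (widen_ord (leqnSn N) i) *: x (widen_ord (leqnSn N) i).
  by rewrite scaler_sumr; apply: eq_bigr => i _; rewrite scalerA mulrC divfK.
by apply; rewrite w0 /= -w1 lerDr.
Qed.

Lemma sub_conv_hull S : S `<=` conv_hull S.
Proof.
move=> z Sz; exists 1%N, (fun _ => 1), (fun _ => z).
by rewrite !big_ord1 scale1r.
Qed.

Lemma conv_hullS S T : S `<=` T -> conv_hull S `<=` conv_hull T.
Proof.
move=> ST z [N [w [x [w0 [w1 [Sx ->]]]]]].
by exists N, w, x; split=> //; split=> //; split=> // i; apply: ST.
Qed.

Lemma conv_hull_convex S : is_convex (conv_hull S).
Proof.
move=> y z l [N1 [w1 [x1 [w10 [w11 [S1 ->]]]]]] [N2 [w2 [x2 [w20 [w21 [S2 ->]]]]]].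
move=> /andP[l0 l1].
have sl i : fintype.split (lshift N2 i) = inl i := unsplitK (inl _ i).
have sr j : fintype.split (rshift N1 j) = inr j := unsplitK (inr _ j).
exists (N1 + N2)%N,
  (fun k => match fintype.split k with inl i => (1 - l) * w1 i | inr j => l * w2 j end),
  (fun k => match fintype.split k with inl i => x1 i | inr j => x2 j end).
split; first by move=> k; case: (fintype.split k) => i; apply: mulr_ge0 => //; lra.
split.
  rewrite big_split_ord /=.
  under eq_bigr do rewrite sl.
  under [X in _ + X]eq_bigr do rewrite sr.
  by rewrite -!mulr_sumr w11 w21 !mulr1 subrK.
split; first by move=> k; case: (fintype.split k) => i; [apply: S1|apply: S2].
apply/esym; rewrite big_split_ord /= !scaler_sumr.
by congr (_ + _); apply: eq_bigr => i _; rewrite ?sl ?sr scalerA.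
Qed.

Lemma closure_convex D : is_convex D -> is_convex (closure D).
Proof.
move=> cD a b l ca cb /andP[l0 l1] B /nbhs_ballP [e e0 sB].
have e20 : 0 < e / 2 by rewrite divr_gt0.
have [a' [Da' aa']] := ca _ (nbhsx_ballx a (e / 2) e20).
have [b' [Db' bb']] := cb _ (nbhsx_ballx b (e / 2) e20).
exists ((1 - l) *: a' + l *: b'); split; first by apply: cD => //; rewrite l0 l1.
apply: sB; move: aa' bb'; rewrite -!ball_normE /= => aa' bb'.
have -> : (1 - l) *: a + l *: b - ((1 - l) *: a' + l *: b') =
  (1 - l) *: (a - a') + l *: (b - b') by mxring.
apply: (le_lt_trans (ler_normD _ _)); rewrite !normrZ (ger0_norm l0) ger0_norm; last lra.
have : (1 - l) * `|a - a'| <= (1 - l) * (e / 2) by apply: ler_wpM2l; [lra|exact: ltW].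
have : l * `|b - b'| <= l * (e / 2) by apply: ler_wpM2l => //; exact: ltW.
lra.
Qed.

Lemma clconv_convex S : is_convex (clconv S).
Proof. exact/closure_convex/conv_hull_convex. Qed.

Lemma clconv_min S D : closed D -> is_convex D -> S `<=` D -> clconv S `<=` D.
Proof.
move=> clD cD SD; rewrite /clconv (closure_id D).1 //.
by apply: closureS; exact: conv_hull_min.
Qed.

Definition bidirs D x : set M :=
  [set f | exists e : R, 0 < e /\ D (x + e *: f) /\ D (x - e *: f)].

Definition bidirs_space D x (U : {vspace M}) := forall f, f \in U <-> bidirs D x f.

Lemma bidirs0 D x : D x -> bidirs D x 0.
Proof. by move=> Dx; exists 1; rewrite scaler0 addr0 subr0. Qed.

Lemma bidirsN D x f : bidirs D x f -> bidirs D x (- f).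
Proof. by case=> e [e0 [Dp Dm]]; exists e; rewrite scalerN opprK. Qed.

Lemma bidirsZ D x f c : D x -> bidirs D x f -> bidirs D x (c *: f).
Proof.
move=> Dx [e [e0 [Dp Dm]]].
have [->|c0] := eqVneq c 0; first by rewrite scale0r; exact: bidirs0.
exists (e / `|c|); split; first by rewrite divr_gt0 ?normr_gt0.
rewrite scalerA; case: (ltrP 0 c) => c_sign.
  by rewrite gtr0_norm // divfK.
by rewrite ler0_norm // invrN mulrN mulNr divfK // scaleNr opprK.
Qed.

Lemma bidirsD D x f g : is_convex D -> D x -> bidirs D x f -> bidirs D x g ->
  bidirs D x (f + g).
Proof.
move=> cD Dx [e1 [e1p [Df Df']]] [e2 [e2p [Dg Dg']]].
pose e := Order.min e1 e2.
have ep : 0 < e by rewrite lt_min e1p e2p.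
have e_le : 0 <= e <= e1 /\ 0 <= e <= e2 by rewrite ge_min lexx ge_min lexx orbT ltW.
have Dfe : D (x + e *: f) by apply: (convex_ray_le cD Dx Df); case: e_le.
have Dge : D (x + e *: g) by apply: (convex_ray_le cD Dx Dg); case: e_le.
have Dfe' : D (x + e *: - f).
  by apply: (convex_ray_le cD Dx _ e1p); [rewrite scalerN | case: e_le].
have Dge' : D (x + e *: - g).
  by apply: (convex_ray_le cD Dx _ e2p); [rewrite scalerN | case: e_le].
have half : 0 <= (2^-1 : R) <= 1 by apply/andP; split; lra.
exists (e / 2); split; first by rewrite divr_gt0.
split.
  have -> : x + e / 2 *: (f + g) = (1 - 2^-1) *: (x + e *: f) + 2^-1 *: (x + e *: g).
    by mxfield.
  exact: cD.
have -> : x - e / 2 *: (f + g) = (1 - 2^-1) *: (x + e *: - f) + 2^-1 *: (x + e *: - g).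
  by mxfield.
exact: cD.
Qed.

Lemma exists_bidirs_space D x : is_convex D -> D x -> exists U, bidirs_space D x U.
Proof.
move=> cD Dx; apply: vspace_of_subspace; first exact: bidirs0.
  by move=> f g; exact: bidirsD.
by move=> c f; exact: bidirsZ.
Qed.

Lemma bidirs_segment D y w l f : is_convex D -> D w -> bidirs D y f -> 0 <= l < 1 ->
  bidirs D ((1 - l) *: y + l *: w) f.
Proof.
move=> cD Dw [e [e0 [Dp Dm]]] /andP[l0 l1].
have l01 : 0 <= l <= 1 by rewrite l0 ltW.
exists ((1 - l) * e); split; first by rewrite mulr_gt0 // subr_gt0.
split.
  have -> : (1 - l) *: y + l *: w + (1 - l) * e *: f = (1 - l) *: (y + e *: f) + l *: w.
    by mxring.
  exact: cD.
have -> : (1 - l) *: y + l *: w - (1 - l) * e *: f = (1 - l) *: (y - e *: f) + l *: w.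
  by mxring.
exact: cD.
Qed.

Definition minimal_face D x : set M :=
  [set y | D y /\ exists e : R, 0 < e /\ D (x + e *: (x - y))].

Lemma minimal_face_self D x : D x -> minimal_face D x x.
Proof. by move=> Dx; split=> //; exists 1; rewrite subrr scaler0 addr0. Qed.

Lemma minimal_face_bidirs D x y : is_convex D -> D x -> minimal_face D x y ->
  bidirs D x (y - x).
Proof.
move=> cD Dx [Dy [e [e0 De]]].
pose d := Order.min 1 e.
have d_gt0 : 0 < d by rewrite lt_min e0 ltr01.
exists d; split => //; split.
  apply: (convex_ray_le cD Dx _ ltr01); first by rewrite scale1r addrC subrK.
  by rewrite ge_min lexx ltW.
have -> : x - d *: (y - x) = x + d *: (x - y) by mxring.
by apply: (convex_ray_le cD Dx De e0); rewrite ge_min lexx orbT ltW.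
Qed.

Lemma minimal_face_side D x a b z l : is_convex D -> D x -> D a -> D b ->
  minimal_face D x z -> z = (1 - l) *: a + l *: b -> 0 < l < 1 -> minimal_face D x a.
Proof.
move=> cD Dx Da Db [Dz [e [e0 Dw]]] zE /andP[l0 l1]; split => //.
exists ((1 - l) * e / (1 + e)); split; first by rewrite divr_gt0 ?mulr_gt0 //; lra.
have -> : x + (1 - l) * e / (1 + e) *: (x - a) =
    x + (1 + e)^-1 *: (x + e *: (x - z) - x) + l * e / (1 + e) *: (b - x).
  rewrite zE; mxfield; lra.
apply: convex_comb3 => //.
- by rewrite invr_ge0; lra.
- by rewrite divr_ge0 ?mulr_ge0 //; lra.
- have -> : (1 + e)^-1 + l * e / (1 + e) = (1 + l * e) / (1 + e) by field; lra.
  by rewrite ler_pdivrMr ?mul1r; [nra|lra].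
Qed.

Lemma minimal_face_convex D x : is_convex D -> D x -> is_convex (minimal_face D x).
Proof.
move=> cD Dx y1 y2 l [D1 [e1 [e1p h1]]] [D2 [e2 [e2p h2]]] l01.
split; first exact: cD.
pose e := Order.min e1 e2.
have ep : 0 < e by rewrite lt_min e1p e2p.
have a1 : D (x + e *: (x - y1)).
  by apply: (convex_ray_le cD Dx h1 e1p); rewrite ge_min lexx ltW.
have a2 : D (x + e *: (x - y2)).
  by apply: (convex_ray_le cD Dx h2 e2p); rewrite ge_min lexx orbT ltW.
exists e; split => //.
have -> : x + e *: (x - ((1 - l) *: y1 + l *: y2)) =
    (1 - l) *: (x + e *: (x - y1)) + l *: (x + e *: (x - y2)) by mxring.
exact: cD.
Qed.

Lemma face_minimal_face D x : is_convex D -> D x -> face D (minimal_face D x).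
Proof.
move=> cD Dx; split; first exact: minimal_face_convex.
split; first by move=> y [].
move=> a b sab [z [[l [/andP[l0 l1] zE]] Fz]].
have Da : D a by apply: sab; exists 0; rewrite subr0 scale1r scale0r addr0 lexx ler01.
have Db : D b by apply: sab; exists 1; rewrite subrr scale0r scale1r add0r lexx ler01.
have Fa : minimal_face D x a by apply: (minimal_face_side cD Dx Da Db Fz zE); rewrite l0 l1.
have Fb : minimal_face D x b.
  apply: (minimal_face_side (l := 1 - l) cD Dx Db Da Fz); first by rewrite zE; mxring.
  by apply/andP; split; lra.
by move=> y [l' [l'01 ->]]; exact: minimal_face_convex.
Qed.

Lemma affdim_minimal_face D x U k : is_convex D -> D x -> bidirs_space D x U ->
  (\dim U <= k)%N -> affdim_le (minimal_face D x) k.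
Proof.
move=> cD Dx hU Uk; right; exists U; split=> // y1 y2 F1 F2.
have -> : y1 - y2 = (y1 - x) - (y2 - x) by mxring.
by apply: memvB; apply/hU; exact: minimal_face_bidirs.
Qed.

Lemma rec_cone0 D : rec_cone D 0.
Proof. by move=> x t Dx _; rewrite scaler0 addr0. Qed.

Lemma rec_coneZ D d c : rec_cone D d -> 0 <= c -> rec_cone D (c *: d).
Proof. by move=> rd c0 x t Dx t0; rewrite scalerA; apply: rd => //; rewrite mulr_ge0. Qed.

Lemma rec_cone_convex D : is_convex D -> is_convex (rec_cone D).
Proof.
move=> cD a b l ra rb l01 x t Dx t0.
have -> : x + t *: ((1 - l) *: a + l *: b) = (1 - l) *: (x + t *: a) + l *: (x + t *: b).
  by mxring.
exact: cD (ra x t Dx t0) (rb x t Dx t0) l01.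
Qed.

Lemma closed_line_preimage D x d : closed D -> closed [set t : R | D (x + t *: d)].
Proof.
apply: (continuous_closedP (fun t : R => x + t *: d)).1 => t.
have := continuousD (f := fun=> x) (g := fun s : R => s *: d) (x := t).
by apply; [exact: cst_continuous | exact: scalel_continuous].
Qed.

Lemma closed_rec_cone D : closed D -> closed (rec_cone D).
Proof.
move=> clD; have -> : rec_cone D = \bigcap_(xt in [set xt : M * R | D xt.1 /\ 0 <= xt.2])
    [set d | D (xt.1 + xt.2 *: d)].
  by apply/seteqP; split=> [d rd [x t] [Dx t0]|d rd x t Dx t0]; [exact: rd | exact: (rd (x, t))].
apply: closed_bigI => -[x t] _.
apply: (continuous_closedP (fun d : M => x + t *: d)).1 clD => d.
have := continuousD (f := fun=> x) (g := fun e : M => t *: e) (x := d).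
by apply; [exact: cst_continuous | exact: scaler_continuous].
Qed.

Lemma rec_cone_of_ray D x d : closed D -> is_convex D -> D x ->
  (forall t, 0 <= t -> D (x + t *: d)) -> rec_cone D d.
Proof.
move=> clD cD Dx ray z s Dz s0.
pose u k := z + s *: d + harmonic k *: (x - z).
have u_cvg : u @ \oo --> z + s *: d.
  have := cvgD (cvg_cst (z + s *: d)) (cvgZr_tmp (a := x - z) (@cvg_harmonic R)).
  by rewrite scale0r addr0; apply; exact: eventually_filter.
apply: (closed_cvg D clD _ _ u_cvg); apply: nearW => k; have hk0 : 0 < harmonic k :> R by exact: harmonic_gt0.
have -> : u k = (1 - harmonic k) *: z + harmonic k *: (x + s / harmonic k *: d).
  rewrite /u; mxfield; exact: lt0r_neq0.
apply: cD => //; first by apply: ray; rewrite divr_ge0 // ltW.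
by rewrite ltW //= /harmonic invf_le1 // ler1n.
Qed.

Lemma ray_exit D x d : closed D -> is_convex D -> D x -> ~ rec_cone D d ->
  exists t, 0 <= t /\ D (x + t *: d) /\ forall e, 0 < e -> ~ D (x + (t + e) *: d).
Proof.
move=> clD cD Dx nrd.
have [t0 [t0_gt0 nDt0]] : exists t0, 0 < t0 /\ ~ D (x + t0 *: d).
  apply: contrapT => allD; apply/nrd/(rec_cone_of_ray clD cD Dx) => t.
  case: (ltrP 0 t) => [t_gt0 _|t_le0 t_ge0].
    by apply: contrapT => nDt; apply: allD; exists t.
  have -> : t = 0 by lra.
  by rewrite scale0r addr0.
pose T := [set t : R | 0 <= t] `&` [set t : R | D (x + t *: d)].
have clT : closed T by apply: closedI; [exact: closed_ge | exact: closed_line_preimage].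
have T0 : T 0 by split => /=; [exact: lexx | rewrite scale0r addr0].
have T_ub : ubound T t0.
  move=> t [/= t_ge0 Dt]; rewrite leNgt; apply/negP => tt0; apply: nDt0.
  by apply: (convex_ray_le cD Dx Dt); [exact: lt_trans tt0 | rewrite (ltW t0_gt0) (ltW tt0)].
have Tsup : T (sup T).
  have := closure_sup (ex_intro _ 0 T0) (ex_intro _ t0 T_ub).
  by rewrite -(closure_id T).1.
exists (sup T); split; first by case: Tsup.
split; first by case: Tsup.
move=> e e0 De.
have : T (sup T + e) by split => //=; case: Tsup => /= ? _; lra.
by move/(sup_upper_bound (conj (ex_intro _ 0 T0) (ex_intro _ t0 T_ub))); lra.
Qed.

Lemma no_line_rec_cone D x d : no_line D -> D x -> rec_cone D d -> rec_cone D (- d) ->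
  d = 0.
Proof.
move=> nlD Dx rd rnd; apply/eqP; apply: contraT => d0; case: nlD.
exists x, d; split=> // t; case: (leP 0 t) => t0; first exact: rd.
by have := rnd x (- t) Dx; rewrite scaleNr scalerN opprK; apply; lra.
Qed.

(* Leave P along the line at its last point t; beyond t the line lies in -P, so by
   closedness the point at t lies in P and in -P. *)
Lemma double_cone_line_through0 (P : set M) u v :
  closed P -> is_convex P -> P 0 -> (forall w, P w -> P (- w) -> w = 0) ->
  P u -> v != 0 -> (forall s, P (u + s *: v) \/ P (- (u + s *: v))) ->
  exists s, u + s *: v = 0.
Proof.
move=> clP cP P0 ptP Pu v0 Pline.
have exit_along v' : (forall s, P (u + s *: v') \/ P (- (u + s *: v'))) ->
    ~ rec_cone P v' -> exists s, u + s *: v' = 0.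
  move=> Pline' nrv; have [t [t0 [Pt out]]] := ray_exit clP cP Pu nrv.
  have Pneg e : 0 < e -> P (- u + (t + e) *: - v').
    by move=> e0; rewrite scalerN -opprD; case: (Pline' (t + e)) => // /(out e e0).
  have t_cvg : (fun k => t + harmonic k) @ \oo --> t.
    have := cvgD (cvg_cst t) (@cvg_harmonic R); rewrite addr0.
    by apply; exact: eventually_filter.
  have Pnt : P (- u + t *: - v').
    apply: (closed_cvg [set s : R | P (- u + s *: - v')] _ _ _ t_cvg).
      exact: closed_line_preimage.
    by apply: nearW => k; apply: Pneg; exact: harmonic_gt0.
  by exists t; apply: ptP => //; rewrite opprD -scalerN.
case: (pselect (rec_cone P v)) => rv; last exact: exit_along.
case: (pselect (rec_cone P (- v))) => rnv.
  have Pv : P v by have := rv 0 1 P0 ler01; rewrite add0r scale1r.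
  have Pnv : P (- v) by have := rnv 0 1 P0 ler01; rewrite add0r scale1r.
  by move: v0; rewrite (ptP v Pv Pnv) eqxx.
have [|s us0] := exit_along (- v) _ rnv.
  by move=> s; rewrite scalerN -scaleNr.
by exists (- s); rewrite scaleNr -scalerN.
Qed.

End ConvexSets.

Section ExtremeDecomposition.
Variables (R : realType) (n p : nat).
Local Notation M := 'M[R]_(n, p).
Variable D : set M.
Hypotheses (D_closed : closed D) (D_convex : is_convex D) (D_noline : no_line D).

Definition extreme_point e := D e /\ forall f, bidirs D e f -> f = 0.

Definition extreme_dir r :=
  rec_cone D r /\ forall f, bidirs (rec_cone D) r f -> f \in <[r]>%VS.

Definition extreme_sums : set M :=
  [set z | exists e r s, extreme_point e /\ extreme_dir r /\ 0 <= s /\ z = e + s *: r].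

Lemma extreme_point_dim0 e U : D e -> bidirs_space D e U -> \dim U = 0%N ->
  extreme_point e.
Proof.
move=> De hU /eqP; rewrite dimv_eq0 => /eqP U0.
by split=> // f /hU; rewrite U0 memv0 => /eqP.
Qed.

Lemma extreme_dir0 x : D x -> extreme_dir 0.
Proof.
move=> Dx; split=> [|f [e [e0 [rf rnf]]]]; first exact: rec_cone0.
rewrite add0r in rf; rewrite sub0r in rnf.
have /eqP := no_line_rec_cone D_noline Dx rf rnf.
by rewrite scaler_eq0 (gt_eqF e0) => /eqP ->; exact: mem0v.
Qed.

Lemma bidirs_exit x d U : D x -> bidirs_space D x U -> bidirs D x d -> ~ rec_cone D d ->
  exists t, 0 < t /\ D (x + t *: d) /\
    forall U', bidirs_space D (x + t *: d) U' -> (\dim U' < \dim U)%N.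
Proof.
move=> Dx hU [e [e0 [Dp Dm]]] nrd.
have [t [t0 [Dt out]]] := ray_exit D_closed D_convex Dx nrd.
have et : e <= t.
  rewrite leNgt; apply/negP => te; apply: (out (e - t)); first lra.
  by rewrite subrKC.
exists t; split; first lra.
split=> // U' hU'.
have U'U : (U' <= U)%VS.
  apply/subvP => f /hU' fy; apply/hU.
  have -> : x = (1 - t / (t + e)) *: (x + t *: d) + t / (t + e) *: (x - e *: d).
    mxfield; lra.
  apply: bidirs_segment => //; rewrite divr_ge0 /=; try lra.
  by rewrite ltr_pdivrMr ?mul1r; lra.
have dU : d \in U by apply/hU; exists e.
have dU' : d \notin U'.
  apply/negP => /hU' [e' [e'0 [Dp' _]]]; apply: (out e' e'0).
  by rewrite scalerDl addrA.
rewrite (ltn_leqif (dimv_leqif_sup U'U)); apply/negP => /subvP/(_ d dU).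
exact/negP.
Qed.

Section RecessiveBidirections.
Variables (x : M) (U : {vspace M}).
Hypotheses (Dx : D x) (hU : bidirs_space D x U).
Hypothesis rec_bidirs : forall d, bidirs D x d -> rec_cone D d \/ rec_cone D (- d).

Lemma exists_rec_bidir : U != 0%VS -> exists w, [/\ w \in U, rec_cone D w & w != 0].
Proof.
move=> U0; have [u uU u0] : exists2 u, u \in U & u != 0.
  by exists (vpick U); [exact: memv_pick | rewrite vpick0].
case: (rec_bidirs (proj1 (hU u) uU)) => ru; first by exists u.
by exists (- u); rewrite memvN oppr_eq0.
Qed.

Lemma rec_bidirs_dim_le1 : (\dim U <= 1)%N.
Proof.
rewrite leqNgt; apply/negP => U2.
have [|w [wU rw w0]] := exists_rec_bidir; first by rewrite -dimv_eq0 -lt0n; lia.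
have [v vU vw] : exists2 v, v \in U & v \notin <[w]>%VS.
  by apply/subvPn/negP => /dimvS; rewrite dim_vline w0; lia.
have v0 : v != 0 by apply: contraNneq vw => ->; exact: mem0v.
have line_split s : rec_cone D (w + s *: v) \/ rec_cone D (- (w + s *: v)).
  by apply: rec_bidirs; apply/hU; rewrite memvD // memvZ.
have [s wsv0] := double_cone_line_through0 (closed_rec_cone D_closed)
  (rec_cone_convex D_convex) (@rec_cone0 _ _ _ D) (fun d => no_line_rec_cone D_noline Dx)
  rw v0 line_split.
have s0 : s != 0 by apply: contraNneq w0 => s0; rewrite -wsv0 s0 scale0r addr0.
have wE : w = - (s *: v) by apply/eqP; rewrite -addr_eq0 wsv0.
move/negP: vw; apply; apply/vlineP; exists (- s^-1).
by rewrite wE scaleNr scalerN opprK scalerA mulVf // scale1r.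
Qed.

Lemma extreme_sums_of_rec_bidirs : extreme_sums x.
Proof.
have := rec_bidirs_dim_le1; rewrite leq_eqVlt ltnS leqn0 => /orP[/eqP U1|/eqP U0];
  last first.
  exists x, 0, 0; split; first exact: extreme_point_dim0 hU U0.
  by split; [exact: extreme_dir0 Dx | rewrite scaler0 addr0].
have [|w [wU rw w0]] := exists_rec_bidir; first by rewrite -dimv_eq0 U1.
have nrnw : ~ rec_cone D (- w).
  by move=> rnw; move/eqP: w0; apply; exact: no_line_rec_cone D_noline Dx rw rnw.
have nwU : - w \in U by rewrite memvN.
have [t [t0 [Dy dim_y]]] := bidirs_exit Dx hU (proj1 (hU _) nwU) nrnw.
have Uw : U = <[w]>%VS.
  by apply/eqP; rewrite eq_sym eqEdim -memvE wU dim_vline w0 U1.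
exists (x + t *: - w), w, t; split.
  have [Uy hUy] := exists_bidirs_space D_convex Dy.
  have Uy0 : \dim Uy = 0%N by have := dim_y _ hUy; rewrite U1; lia.
  exact: extreme_point_dim0 hUy Uy0.
split; last by split; [exact: ltW | mxring].
split=> // f [e [e0 [rp rm]]].
rewrite -Uw; apply/hU; exists (t * e); split; first exact: mulr_gt0.
split.
  have -> : x + t * e *: f = x + t *: - w + t *: (w + e *: f) by mxring.
  exact: rp _ t Dy (ltW t0).
have -> : x - t * e *: f = x + t *: - w + t *: (w - e *: f) by mxring.
exact: rm _ t Dy (ltW t0).
Qed.

End RecessiveBidirections.

Lemma conv_extreme_sums x : D x -> conv_hull extreme_sums x.
Proof.
move=> Dx; have [U hU] := exists_bidirs_space D_convex Dx.
have [N UN] : exists N, \dim U = N by eexists.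
elim/ltn_ind: N x U Dx hU UN => N IH x U Dx hU UN; rewrite -UN in IH.
case: (pselect (exists d, bidirs D x d /\ ~ rec_cone D d /\ ~ rec_cone D (- d))).
  move=> [d [dx [nrd nrnd]]].
  have [t1 [t1p [D1 lt1]]] := bidirs_exit Dx hU dx nrd.
  have [t2 [t2p [D2 lt2]]] := bidirs_exit Dx hU (bidirsN dx) nrnd.
  have [U1 hU1] := exists_bidirs_space D_convex D1.
  have [U2 hU2] := exists_bidirs_space D_convex D2.
  have g1 := IH _ (lt1 _ hU1) _ _ D1 hU1 erefl.
  have g2 := IH _ (lt2 _ hU2) _ _ D2 hU2 erefl.
  have t12 : 0 < t1 + t2 by rewrite addr_gt0.
  have -> : x = (1 - t1 / (t1 + t2)) *: (x + t1 *: d) + t1 / (t1 + t2) *: (x + t2 *: - d).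
    by mxfield; rewrite gt_eqF.
  apply: conv_hull_convex g1 g2 _; rewrite divr_ge0 ?(ltW t1p) ?(ltW t12) //=.
  by rewrite ler_pdivrMr // mul1r lerDl ltW.
move=> no_free_dir; apply/sub_conv_hull/(extreme_sums_of_rec_bidirs Dx hU) => d dx.
case: (pselect (rec_cone D d)) => rd; [by left | right].
by apply: contrapT => nrnd; apply: no_free_dir; exists d.
Qed.

End ExtremeDecomposition.

Section ExtendedBounds.
Variable R : realType.

Lemma ereal_ge_conv (b : \bar R) x y l : (b <= x%:E)%E -> (b <= y%:E)%E -> 0 <= l <= 1 ->
  (b <= ((1 - l) * x + l * y)%:E)%E.
Proof.
move=> + + /andP[l0 l1]; case: b => [r hx hy| |_ _]; last by rewrite leNye.
  rewrite !lee_fin in hx hy *.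
  have : (1 - l) * r <= (1 - l) * x by apply: ler_wpM2l => //; lra.
  have : l * r <= l * y by apply: ler_wpM2l.
  nra.
by rewrite leye_eq.
Qed.

Lemma ereal_le_conv (b : \bar R) x y l : (x%:E <= b)%E -> (y%:E <= b)%E -> 0 <= l <= 1 ->
  (((1 - l) * x + l * y)%:E <= b)%E.
Proof.
move=> + + /andP[l0 l1]; case: b => [r hx hy|_ _|]; last by rewrite leeNy_eq.
  rewrite !lee_fin in hx hy *.
  have : (1 - l) * x <= (1 - l) * r by apply: ler_wpM2l => //; lra.
  have : l * y <= l * r by apply: ler_wpM2l.
  nra.
by rewrite leey.
Qed.

Lemma closed_ereal_ge (T : topologicalType) (g : T -> R) (b : \bar R) : continuous g ->
  closed [set x | (b <= (g x)%:E)%E].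
Proof.
move=> cg; case: b => [r| |].
- have -> : [set x | (r%:E <= (g x)%:E)%E] = g @^-1` [set s | r <= s].
    by apply/seteqP; split => x /=; rewrite lee_fin.
  exact: (continuous_closedP g).1 cg _ (@closed_ge _ r).
- have -> : [set x | (+oo <= (g x)%:E)%E] = set0.
    by apply/seteqP; split => x //=; rewrite leye_eq.
  exact: closed0.
- have -> : [set x | (-oo <= (g x)%:E)%E] = setT.
    by apply/seteqP; split => x //= _; rewrite leNye.
  exact: closedT.
Qed.

Lemma closed_ereal_le (T : topologicalType) (g : T -> R) (b : \bar R) : continuous g ->
  closed [set x | ((g x)%:E <= b)%E].
Proof.
move=> cg; case: b => [r| |].
- have -> : [set x | ((g x)%:E <= r%:E)%E] = g @^-1` [set s | s <= r].
    by apply/seteqP; split => x /=; rewrite lee_fin.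
  exact: (continuous_closedP g).1 cg _ (@closed_le _ r).
- have -> : [set x | ((g x)%:E <= +oo)%E] = setT.
    by apply/seteqP; split => x //= _; rewrite leey.
  exact: closedT.
- have -> : [set x | ((g x)%:E <= -oo)%E] = set0.
    by apply/seteqP; split => x //=; rewrite leeNy_eq.
  exact: closed0.
Qed.

End ExtendedBounds.

Section TraceInner.
Variables (R : realType) (n p : nat).
Local Notation M := 'M[R]_(n, p).

Lemma mxinnerDr (B X Y : M) : mxinner B (X + Y) = mxinner B X + mxinner B Y.
Proof. by rewrite /mxinner mulmxDr mxtraceD. Qed.

Lemma mxinnerZr (B X : M) c : mxinner B (c *: X) = c * mxinner B X.
Proof. by rewrite /mxinner -scalemxAr mxtraceZ. Qed.

Lemma mxinnerDl (Y : M) : {morph (fun X : M => mxinner X Y) : X1 X2 / X1 + X2}.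
Proof. by move=> X1 X2 /=; rewrite /mxinner raddfD mulmxDl mxtraceD. Qed.

Lemma mxinnerZl (X Y : M) c : mxinner (c *: X) Y = c * mxinner X Y.
Proof. by rewrite /mxinner linearZ /= -scalemxAl mxtraceZ. Qed.

Lemma mxinner0l (Y : M) : mxinner 0 Y = 0.
Proof. by rewrite /mxinner trmx0 mul0mx mxtrace0. Qed.

Lemma mxinner_sum (B X : M) : mxinner B X = \sum_(i < p) \sum_(j < n) B j i * X j i.
Proof.
rewrite /mxinner /mxtrace; apply: eq_bigr => i _; rewrite mxE.
by apply: eq_bigr => j _; rewrite mxE.
Qed.

Lemma continuous_mxinner (B : M) : continuous (mxinner B).
Proof.
move=> X; rewrite (_ : mxinner B = fun Y => \sum_(i < p) \sum_(j < n) B j i * Y j i).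
  apply: cvg_big => [||i _]; [exact: add_continuous | exact: nbhs_filter |].
  apply: cvg_big => [||j _]; [exact: add_continuous | exact: nbhs_filter |].
  by apply: cvgMl_tmp; [exact: nbhs_filter | exact: coord_continuous].
by apply/funext => Y; rewrite mxinner_sum.
Qed.

Lemma dim_le_lmi_dim m (A : 'I_m -> M) (U W : {vspace M}) :
  (forall f, f \in U -> (forall i, mxinner (A i) f = 0) -> f \in W) ->
  (\dim U <= lmi_dim A + \dim W)%N.
Proof.
move=> UW.
pose V := <<[seq A i | i <- enum 'I_m]>>%VS.
pose B := vbasis V.
pose g (Y : M) : 'rV[R]_(\dim V) := \row_(j < \dim V) mxinner B`_j Y.
have g_linear : linear g.
  by move=> a X Y; apply/rowP => j; rewrite !mxE mxinnerDr mxinnerZr.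
pose gL : {linear M -> 'rV[R]_(\dim V)} := HB.pack g (GRing.isLinear.Build _ _ _ _ g g_linear).
pose h := linfun gL.
have dim_img : (\dim (h @: U) <= \dim V)%N.
  by apply: leq_trans (dimvS (subvf _)) _; rewrite dimvf /dim /= mul1n.
have dim_ker : (\dim (U :&: lker h) <= \dim W)%N.
  apply: dimvS; apply/subvP => f /memv_capP [fU]; rewrite memv_ker lfunE /= => /eqP gf0.
  apply: UW => // i.
  have Ai : A i \in V by apply: memv_span; apply/mapP; exists i; rewrite ?mem_enum.
  rewrite (coord_vbasis Ai) (big_morph _ (mxinnerDl f) (mxinner0l f)).
  apply: big1 => j _; rewrite mxinnerZl.
  have : g f 0 j = 0 by rewrite gf0 mxE.
  by rewrite mxE => ->; rewrite mulr0.
by rewrite -(limg_ker_dim h U) addnC leq_add.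
Qed.

End TraceInner.

Section LMICut.
Variables (R : realType) (n p : nat).
Local Notation M := 'M[R]_(n, p).
Variables (X : set M) (m : nat) (A : 'I_m -> M) (bl bu : 'I_m -> \bar R).

Definition lmi_feasible : set M :=
  [set Y | forall i, (bl i <= (mxinner (A i) Y)%:E <= bu i)%E].

Definition lmi_null (f : M) := forall i, mxinner (A i) f = 0.

Local Notation K := (clconv X).
Local Notation C := (K `&` lmi_feasible).

Lemma lmi_cutE (S : set M) : lmi_cut S A bl bu = S `&` lmi_feasible.
Proof. by []. Qed.

Lemma lmi_feasible_convex : is_convex lmi_feasible.
Proof.
move=> Y Z l fY fZ l01 i; rewrite mxinnerDr !mxinnerZr.
by case/andP: (fY i) => ? ?; case/andP: (fZ i) => ? ?; rewrite ereal_ge_conv ?ereal_le_conv.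
Qed.

Lemma lmi_feasible_closed : closed lmi_feasible.
Proof.
have -> : lmi_feasible = \bigcap_(i in [set: 'I_m])
    ([set Y | (bl i <= (mxinner (A i) Y)%:E)%E] `&` [set Y | ((mxinner (A i) Y)%:E <= bu i)%E]).
  apply/seteqP; split => Y; first by move=> fY i _; case/andP: (fY i).
  by move=> fY i; have [] := fY i I => /= -> ->.
apply: closed_bigI => i _; apply: closedI.
  exact: (closed_ereal_ge (b := bl i) (@continuous_mxinner _ _ _ (A i))).
exact: (closed_ereal_le (b := bu i) (@continuous_mxinner _ _ _ (A i))).
Qed.

Lemma lmi_feasibleD Y f : lmi_null f -> lmi_feasible Y -> lmi_feasible (Y + f).
Proof. by move=> f0 fY i; rewrite mxinnerDr f0 addr0; exact: fY. Qed.

Lemma lmi_nullZ c f : lmi_null f -> lmi_null (c *: f).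
Proof. by move=> f0 i; rewrite mxinnerZr f0 mulr0. Qed.

Lemma lmi_cut_closed : closed C.
Proof. exact: closedI (@closed_closure _ _) lmi_feasible_closed. Qed.

Lemma lmi_cut_convex : is_convex C.
Proof.
by move=> Y Z l [KY fY] [KZ fZ] l01; split; [exact: clconv_convex | exact: lmi_feasible_convex].
Qed.

Lemma bidirs_lmi_cut e f : C e -> bidirs K e f -> lmi_null f -> bidirs C e f.
Proof.
move=> [Ke fe] [eps [eps0 [Kp Km]]] f0; exists eps; split=> //.
by split; split=> //; [|rewrite -scaleNr]; apply: lmi_feasibleD fe; exact: lmi_nullZ.
Qed.

Lemma rec_cone_lmi_cut x d : C x -> rec_cone C d -> rec_cone K d.
Proof.
move=> [Kx fx] rd; apply: (rec_cone_of_ray (@closed_closure _ _) (@clconv_convex _ _ _ X) Kx).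
by move=> t t0; case: (rd x t (conj Kx fx) t0).
Qed.

Lemma bidirs_rec_lmi_cut r f : rec_cone C r -> bidirs (rec_cone K) r f -> lmi_null f ->
  bidirs (rec_cone C) r f.
Proof.
move=> rC [eps [eps0 [Kp Km]]] f0; exists eps; split=> //.
suff shift g : rec_cone K (r + g) -> lmi_null g -> rec_cone C (r + g).
  by split; apply: shift; rewrite ?(Kp, Km) // -?scaleNr; exact: lmi_nullZ.
move=> rK g0 z t [Kz fz] t0; split; first exact: rK.
rewrite scalerDr addrA; apply: lmi_feasibleD; first exact: lmi_nullZ.
by case: (rC z t (conj Kz fz) t0).
Qed.

Lemma extreme_point_dim e U : extreme_point C e -> bidirs_space K e U ->
  (\dim U <= lmi_dim A)%N.
Proof.
move=> [Ce exte] hU; have := @dim_le_lmi_dim _ _ _ _ A U 0%VS.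
rewrite dimv0 addn0; apply=> f /hU fK f0; rewrite memv0; apply/eqP/exte.
exact: bidirs_lmi_cut.
Qed.

Lemma extreme_dir_dim r U : extreme_dir C r -> bidirs_space (rec_cone K) r U ->
  (\dim U <= (lmi_dim A).+1)%N.
Proof.
move=> [rC extr] hU; apply: leq_trans (@dim_le_lmi_dim _ _ _ _ A U <[r]>%VS _) _.
  by move=> f /hU fK f0; apply: extr; exact: bidirs_rec_lmi_cut.
by rewrite dim_vline -addn1 leq_add2l leq_b1.
Qed.

Hypothesis X_noline : no_line K.
Hypothesis faces_in_X : forall Fa Fb : set M,
  face K Fa -> affdim_le Fa (lmi_dim A) ->
  face (rec_cone K) Fb -> affdim_le Fb (lmi_dim A).+1 ->
  mink_sum Fa Fb `<=` X.

Lemma lmi_cut_noline : no_line C.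
Proof. by case=> x [d [d0 line]]; apply: X_noline; exists x, d; split=> // t; case: (line t). Qed.

Lemma extreme_sums_lmi_cut : extreme_sums C `<=` X `&` lmi_feasible.
Proof.
move=> _ [e [r [s [[Ce exte] [[rC extr] [s0 ->]]]]]].
split; last by case: (rC e s Ce s0).
have Ke := Ce.1.
have rK := rec_cone_lmi_cut Ce rC.
have cK : is_convex K := @clconv_convex _ _ _ X.
have cRK := rec_cone_convex cK.
have [U hU] := exists_bidirs_space cK Ke.
have [V hV] := exists_bidirs_space cRK rK.
apply: (faces_in_X (Fa := minimal_face K e) (Fb := minimal_face (rec_cone K) r)).
- exact: face_minimal_face cK Ke.
- exact: affdim_minimal_face cK Ke hU (extreme_point_dim (conj Ce exte) hU).
- exact: face_minimal_face cRK rK.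
- exact: affdim_minimal_face cRK rK hV (extreme_dir_dim (conj rC extr) hV).
exists e, (s *: r); split; first exact: minimal_face_self.
split=> //; split; first exact: rec_coneZ.
exists (1 + s)^-1; split; first by rewrite invr_gt0; lra.
have -> : r + (1 + s)^-1 *: (r - s *: r) = (2 / (1 + s)) *: r by mxfield; lra.
by apply: rec_coneZ => //; rewrite divr_ge0 //; lra.
Qed.

Lemma lmi_cut_clconv : lmi_cut K A bl bu = clconv (lmi_cut X A bl bu).
Proof.
rewrite !lmi_cutE; apply/seteqP; split => [x Cx|].
  apply/subset_closure/(conv_hullS extreme_sums_lmi_cut).
  exact: (conv_extreme_sums lmi_cut_closed lmi_cut_convex lmi_cut_noline Cx).
apply: clconv_min lmi_cut_closed lmi_cut_convex _.
by move=> z [Xz fz]; split=> //; apply/subset_closure/sub_conv_hull.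
Qed.

End LMICut.

Theorem theorem3 (R : realType) (q : Qkind) (k n p t : nat)
    (F : 'I_t -> 'M[R]_(n, p) -> R) (mt m : nat) :
  (0 < k)%N -> (k <= n)%N -> (n <= p)%N ->
  (forall j, {within Qset (R:=R) (n:=n) (p:=p) q, continuous F j}) ->
  domain_set q k F !=set0 ->
  closed (domain_set q k F) ->
  no_line (clconv (domain_set q k F)) ->
  (mt <= m)%N ->
  (forall Fa Fb : set 'M[R]_(n, p),
      face (clconv (domain_set q k F)) Fa -> affdim_le Fa mt ->
      face (rec_cone (clconv (domain_set q k F))) Fb -> affdim_le Fb mt.+1 ->
      mink_sum Fa Fb `<=` domain_set q k F) ->
  forall (A : 'I_m -> 'M[R]_(n, p)) (bl bu : 'I_m -> \bar R),
    (forall i, (bl i <= bu i)%E) ->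
    lmi_dim A = mt ->
    lmi_cut (clconv (domain_set q k F)) A bl bu =
    clconv (lmi_cut (domain_set q k F) A bl bu).
Proof.
move=> _ _ _ _ _ _ noline _ faces A bl bu _ dimA; subst mt.
exact: lmi_cut_clconv noline faces.
Qed.
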